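(* Let $M$ be a graded generalized Eulerian $A_n(K)$-module. Then for every $i\ge0$ the Koszul homology $H_i(X_1,\dots,X_n;M)$ is concentrated in degree $0$.
   Context: $K$ is a field of characteristic zero, $R=K[X_1,\dots,X_n]$ standard graded, $A_n(K)$ the Weyl algebra graded by $\deg X_i=1$, $\deg\partial_i=-1$; $\mathcal E_n=\sum_iX_i\partial_i$; $|z|$ is the degree of homogeneous $z$. A graded left $A_n(K)$-module $M$ is generalized Eulerian if for every homogeneous $z\in M$ there is $a\ge1$ with $(\mathcal E_n-|z|)^az=0$. Koszul homology $H_i(X_1,\dots,X_n;M)$ is computed from the graded Koszul complex $K_p=\bigoplus_{i_1<\dots<i_p}M(-p)$ with degree-$0$ differentials, so $H_0=M/(X_1,\dots,X_n)M$; here $M(l)_j=M_{j+l}$. *)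

From HB Require Import structures.
From mathcomp Require Import all_boot all_order all_algebra.
Set Implicit Arguments. Unset Strict Implicit. Unset Printing Implicit Defensive.
Import Order.TTheory GRing.Theory Num.Theory.
Local Open Scope ring_scope.

Definition castM (K : fieldType) (M : int -> lmodType K) (a b : int) (e : a = b)
  (x : M a) : M b := eq_rect a (fun t => M t : Type) x b e.

Lemma deg_addK (j : int) : j + 1 - 1 = j. Proof. by rewrite addrK. Qed.
Lemma deg_subK (j : int) : j - 1 + 1 = j. Proof. by rewrite subrK. Qed.
Lemma deg_koszul (j : int) (p : nat) : j - (p.+1)%:Z + 1 = j - p%:Z.
Proof. by rewrite -addn1 PoszD opprD addrA subrK. Qed.

(* A graded left module over the Weyl algebra A_n(K), with deg X_i = 1 and
   deg d_i = -1, given by its homogeneous components M j (j : int) and the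
   action of the generators X_i, d_i, subject to the defining relations of
   A_n(K): [X_i, X_k] = 0, [d_i, d_k] = 0, [d_i, X_k] = delta_{ik}. *)
Record gradedWeylModule (K : fieldType) (n : nat) := GradedWeylModule {
  gM : int -> lmodType K;
  gX : 'I_n -> forall j : int, {linear gM j -> gM (j + 1)};
  gD : 'I_n -> forall j : int, {linear gM j -> gM (j - 1)};
  gXX : forall (i k : 'I_n) (j : int) (m : gM j),
      gX i (j + 1) (gX k j m) = gX k (j + 1) (gX i j m);
  gDD : forall (i k : 'I_n) (j : int) (m : gM j),
      gD i (j - 1) (gD k j m) = gD k (j - 1) (gD i j m);
  gDX : forall (i k : 'I_n) (j : int) (m : gM j),
      castM (deg_addK j) (gD i (j + 1) (gX k j m))
      - castM (deg_subK j) (gX k (j - 1) (gD i j m))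
      = (i == k)%:R *: m
}.

Section Defs.
Variables (K : fieldType) (n : nat) (M : gradedWeylModule K n).

Definition euler (j : int) (m : gM M j) : gM M j :=
  \sum_(i < n) castM (deg_subK j) (gX M i (j - 1) (gD M i j m)).

Definition generalized_eulerian : Prop :=
  forall (j : int) (z : gM M j), exists a : nat,
    (1 <= a)%N /\ iter a (fun w => euler w - j%:~R *: w) z = 0.

(* Degree-j part of the Koszul complex: K_p in degree j is
   \bigoplus_{S subset [n], |S| = p} M(-p)_j = \bigoplus_{|S|=p} M_{j-p};
   an element is a function S |-> c S (only values at |S| = p matter).
   Differential K_{p+1} -> K_p:
     e_S (x) m |-> sum_t (-1)^(t+1) e_{S \ s_t} (x) X_{s_t} m. *)
Definition koszul_d (p : nat) (j : int) (c : {set 'I_n} -> gM M (j - (p.+1)%:Z))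
  (S : {set 'I_n}) : gM M (j - p%:Z) :=
  \sum_(k < n | k \notin S)
     ((-1) ^+ #|[set l in S | (l < k)%N]|) *:
        castM (deg_koszul j p) (gX M k _ (c (k |: S))).

Definition koszul_cycle (i : nat) (j : int) :
  ({set 'I_n} -> gM M (j - i%:Z)) -> Prop :=
  match i return ({set 'I_n} -> gM M (j - i%:Z)) -> Prop with
  | 0 => fun _ => True
  | q.+1 => fun c => forall S : {set 'I_n}, #|S| = q -> koszul_d c S = 0
  end.

Definition koszul_boundary (i : nat) (j : int)
  (c : {set 'I_n} -> gM M (j - i%:Z)) : Prop :=
  exists b : {set 'I_n} -> gM M (j - (i.+1)%:Z),
    forall S : {set 'I_n}, #|S| = i -> koszul_d b S = c S.

Definition koszul_homology_vanishes (i : nat) (j : int) : Prop :=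
  forall c : {set 'I_n} -> gM M (j - i%:Z),
    koszul_cycle c -> koszul_boundary c.

End Defs.

From HB Require Import structures.
From mathcomp Require Import all_boot all_order all_algebra.
Import Order.TTheory GRing.Theory Num.Theory.
Local Open Scope ring_scope.
Set Implicit Arguments. Unset Strict Implicit.

(* The contraction h(e_S (x) m) = sum_{l in S} +- e_{S \ l} (x) d_l m is a
   chain homotopy with dh + hd = E_n + p on K_p.  In internal degree j a chain
   of K_p has components in M_{j-p}, so there dh + hd = N + j with
   N = E_n - (j - p).  Since E_n X_k = X_k (E_n + 1), N commutes with d, and
   by the generalized Eulerian hypothesis N is nilpotent on the finitely many
   components of a chain.  For a cycle z this gives j z = d(h z) - N z, where
   N z is again a cycle of smaller nilpotency exponent; induction on that
   exponent makes z a boundary as soon as j is invertible in K. *)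

Lemma castM_is_linear (K : fieldType) (F : int -> lmodType K) (a b : int)
    (e : a = b) : linear (@castM K F a b e).
Proof. by case: b / e. Qed.

HB.instance Definition _ (K : fieldType) (F : int -> lmodType K) (a b : int)
    (e : a = b) :=
  GRing.isLinear.Build K (F a) (F b) _ (@castM K F a b e)
    (@castM_is_linear K F a b e).

Section Transport.
Variables (K : fieldType) (F : int -> lmodType K).

Lemma castM_irrelevance (a b : int) (e1 e2 : a = b) (x : F a) :
  castM e1 x = castM e2 x.
Proof. by rewrite (eq_irrelevance e1 e2). Qed.

Lemma castM_id (a : int) (e : a = a) (x : F a) : castM e x = x.
Proof. by rewrite (castM_irrelevance e (erefl a)). Qed.

Lemma castM_trans (a b c : int) (e1 : a = b) (e2 : b = c) (x : F a) :
  castM e2 (castM e1 x) = castM (etrans e1 e2) x.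
Proof. by case: c / e2; case: b / e1. Qed.

End Transport.

Lemma euler_is_linear (K : fieldType) (n : nat) (M : gradedWeylModule K n)
    (t : int) : linear (@euler K n M t).
Proof.
move=> r x y; rewrite /euler scaler_sumr -big_split; apply: eq_bigr => i _ /=.
by rewrite !linearP.
Qed.

HB.instance Definition _ (K : fieldType) (n : nat) (M : gradedWeylModule K n)
    (t : int) :=
  GRing.isLinear.Build K (gM M t) (gM M t) _ (@euler K n M t)
    (@euler_is_linear K n M t).

Section WeylModule.
Variables (K : fieldType) (n : nat) (M : gradedWeylModule K n).
Local Notation X := (gX M).
Local Notation D := (gD M).

Lemma castM_gX k (a b : int) (e : a = b) (x : gM M a) :
  X k b (castM e x) = castM (f_equal (fun t => t + 1) e) (X k a x).
Proof. by case: b / e. Qed.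

Lemma gX_gD_comm t k l (w : gM M t) : k != l ->
  castM (deg_subK t) (X k (t - 1) (D l t w)) =
  castM (deg_addK t) (D l (t + 1) (X k t w)).
Proof.
move=> neq_kl; have := gDX l k w; rewrite eq_sym (negbTE neq_kl) scale0r.
by move/eqP; rewrite subr_eq0 => /eqP ->.
Qed.

Lemma gD_gX_diag t k (w : gM M t) :
  castM (deg_addK t) (D k (t + 1) (X k t w)) =
  castM (deg_subK t) (X k (t - 1) (D k t w)) + w.
Proof.
have := gDX k k w; rewrite eqxx scale1r => /eqP; rewrite subr_eq => /eqP ->.
by rewrite addrC.
Qed.

Lemma euler_gX t k (m : gM M t) : euler (X k t m) = X k t (euler m) + X k t m.
Proof.
have DX_eq i : D i (t + 1) (X k t m) = castM (esym (deg_addK t))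
    ((i == k)%:R *: m + castM (deg_subK t) (X k (t - 1) (D i t m))).
  have /eqP := gDX i k m; rewrite subr_eq => /eqP <-.
  by rewrite castM_trans castM_id.
rewrite /euler raddf_sum /=.
transitivity (\sum_(i < n) (X k t (castM (deg_subK t) (X i (t - 1) (D i t m)))
                           + (i == k)%:R *: X i t m)).
  apply: eq_bigr => i _; rewrite DX_eq castM_gX castM_trans castM_id.
  rewrite raddfD /= linearZ /= [RHS]addrC; congr (_ + _).
  by rewrite !castM_gX gXX; apply: castM_irrelevance.
rewrite big_split /=; congr (_ + _).
rewrite (bigD1 k) //= eqxx scale1r big1 ?addr0 // => i /negbTE ->.
by rewrite scale0r.
Qed.

End WeylModule.

Section KoszulSign.
Variables (K : fieldType) (n : nat).

Definition ksign (T : {set 'I_n}) (k : 'I_n) : K :=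
  (-1) ^+ #|[set l in T | (l < k)%N]|.

Lemma ksign_sqr T k : ksign T k * ksign T k = 1.
Proof. by rewrite /ksign -exprD addnn -mul2n exprM sqrrN !expr1n. Qed.

Lemma card_lt_setU1 (a k : 'I_n) (T : {set 'I_n}) : a \notin T ->
  #|[set l in a |: T | (l < k)%N]| =
  ((a < k)%N + #|[set l in T | (l < k)%N]|)%N.
Proof.
move=> aT; case: (boolP (a < k)%N) => [a_lt_k | a_ge_k].
  have -> : [set l in a |: T | (l < k)%N] = a |: [set l in T | (l < k)%N].
    by apply/setP => l; rewrite !inE; case: (eqVneq l a) => [->|].
  by rewrite cardsU1 inE (negbTE aT).
rewrite add0n; apply: eq_card => l; rewrite !inE.
by case: (eqVneq l a) => [->|] //=; rewrite (negbTE a_ge_k) (negbTE aT).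
Qed.

Lemma ksignU1 (a k : 'I_n) (T : {set 'I_n}) : a \notin T ->
  ksign (a |: T) k = (-1) ^+ (a < k)%N * ksign T k.
Proof. by move=> aT; rewrite /ksign card_lt_setU1 // exprD. Qed.

Lemma ksign_swap (k l : 'I_n) (T : {set 'I_n}) :
  k \notin T -> l \notin T -> k != l ->
  ksign (l |: T) k * ksign (k |: T) l = - (ksign T l * ksign T k).
Proof.
move=> kT lT neq_kl; rewrite !ksignU1 // mulrACA mulrC.
have -> : (-1) ^+ (l < k)%N * (-1) ^+ (k < l)%N = -1 :> K.
  case: (ltngtP l k) => [||/val_inj eq_lk]; rewrite ?mulr1 ?mul1r //.
  by rewrite eq_lk eqxx in neq_kl.
by rewrite mulrN1 mulrC.
Qed.

End KoszulSign.

(* [XD k l] and [DX l k] stand for [X_k d_l] and [d_l X_k]; the identity below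
   is [dh + hd = E_n + #|S|] on the [S]-component of a chain [z]. *)
Section HomotopyIdentity.
Variables (K : fieldType) (n : nat) (V : lmodType K) (z : {set 'I_n} -> V).
Variables (XD DX : 'I_n -> 'I_n -> V -> V).
Hypothesis XD_DX : forall k l v, k != l -> XD k l v = DX l k v.
Hypothesis DX_diag : forall k v, DX k k v = XD k k v + v.
Variable S : {set 'I_n}.

Lemma homotopy_dh_term k : k \notin S ->
  ksign K S k *: \sum_(l in k |: S)
      ksign K ((k |: S) :\ l) l *: XD k l (z ((k |: S) :\ l)) =
  XD k k (z S) + \sum_(l in S)
      ksign K S k *: (ksign K ((k |: S) :\ l) l *: XD k l (z ((k |: S) :\ l))).
Proof.
move=> kS; rewrite (bigD1 k) ?setU11 //= setU1K // scalerDr scalerA ksign_sqr.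
rewrite scale1r scaler_sumr; congr (_ + _); apply: eq_bigl => l; rewrite !inE.
by case: (eqVneq l k) => [->|] /=; [rewrite (negbTE kS) | rewrite andbT].
Qed.

Lemma homotopy_hd_term l : l \in S ->
  ksign K (S :\ l) l *: \sum_(k < n | k \notin S :\ l)
      ksign K (S :\ l) k *: DX l k (z (k |: (S :\ l))) =
  XD l l (z S) + z S + \sum_(k < n | k \notin S)
      ksign K (S :\ l) l *: (ksign K (S :\ l) k *: DX l k (z (k |: (S :\ l)))).
Proof.
move=> lS; rewrite (bigD1 l) ?setD11 //= setD1K // scalerDr scalerA ksign_sqr.
rewrite scale1r DX_diag scaler_sumr; congr (_ + _); apply: eq_bigl => k.
by rewrite !inE; case: (eqVneq k l) => [->|] /=; [rewrite lS | rewrite andbT].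
Qed.

Lemma homotopy_cross_term k l : k \notin S -> l \in S ->
  ksign K S k *: (ksign K ((k |: S) :\ l) l *: XD k l (z ((k |: S) :\ l))) =
  - (ksign K (S :\ l) l *: (ksign K (S :\ l) k *: DX l k (z (k |: (S :\ l))))).
Proof.
move=> kS lS; have neq_kl : k != l by apply: contraNneq kS => ->.
have -> : (k |: S) :\ l = k |: (S :\ l).
  apply/setP => x; rewrite !inE; case: (eqVneq x l) => [->|] //=.
  by rewrite eq_sym (negbTE neq_kl).
rewrite XD_DX // !scalerA -scaleNr; congr (_ *: _).
rewrite -{1}(setD1K lS) ksign_swap ?setD11 //.
by rewrite !inE negb_and negbK kS orbT.
Qed.

Lemma koszul_homotopy_identity :
  \sum_(k < n | k \notin S) ksign K S k *: \sum_(l in k |: S)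
      ksign K ((k |: S) :\ l) l *: XD k l (z ((k |: S) :\ l))
  = \sum_(k < n) XD k k (z S) + #|S|%:R *: z S
    - \sum_(l in S) ksign K (S :\ l) l *: \sum_(k < n | k \notin S :\ l)
        ksign K (S :\ l) k *: DX l k (z (k |: (S :\ l))).
Proof.
rewrite (eq_bigr _ homotopy_dh_term) (eq_bigr _ homotopy_hd_term) !big_split /=.
rewrite (bigID (mem S) predT) /= sumr_const (exchange_big _ _ _ (mem S)) /=.
have -> : \sum_(k < n | k \notin S) \sum_(l in S)
    ksign K S k *: (ksign K ((k |: S) :\ l) l *: XD k l (z ((k |: S) :\ l))) =
  - \sum_(k < n | k \notin S) \sum_(l in S)
    ksign K (S :\ l) l *: (ksign K (S :\ l) k *: DX l k (z (k |: (S :\ l)))).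
  rewrite -sumrN; apply: eq_bigr => k kS; rewrite -sumrN.
  by apply: eq_bigr => l lS; apply: homotopy_cross_term.
set A := \sum_(k < n | k \notin S) XD k k (z S).
rewrite scaler_nat; set B := \sum_(k in S) XD k k (z S); set C := z S *+ #|S|.
by rewrite [B + A]addrC -[A + B + C]addrA opprD [RHS]addrA addrK.
Qed.

End HomotopyIdentity.

Section KoszulHomotopy.
Variables (K : fieldType) (n : nat) (M : gradedWeylModule K n).
Local Notation X := (gX M).
Local Notation D := (gD M).
Implicit Types (i : nat) (j : int) (S : {set 'I_n}).

Lemma deg_subS j i : j - i%:Z - 1 = j - (i.+1)%:Z.
Proof. by rewrite -addn1 PoszD opprD addrA. Qed.

Definition koszul_h i j (z : {set 'I_n} -> gM M (j - i%:Z)) S :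
    gM M (j - (i.+1)%:Z) :=
  \sum_(l in S) ksign K (S :\ l) l *: castM (deg_subS j i) (D l _ (z (S :\ l))).

(* [h (d z)] at [S], with [d z] expanded so that it also makes sense for
   [i = 0]. *)
Definition koszul_hd i j (z : {set 'I_n} -> gM M (j - i%:Z)) S :
    gM M (j - i%:Z) :=
  \sum_(l in S) ksign K (S :\ l) l *: castM (deg_addK (j - i%:Z))
     (D l _ (\sum_(k < n | k \notin S :\ l)
               ksign K (S :\ l) k *: X k _ (z (k |: (S :\ l))))).

Lemma koszul_dh i j (z : {set 'I_n} -> gM M (j - i%:Z)) S :
  koszul_d (koszul_h z) S = euler (z S) + #|S|%:R *: z S - koszul_hd z S.
Proof.
pose t := j - i%:Z.
pose XD k l (w : gM M t) := castM (deg_subK t) (X k (t - 1) (D l t w)).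
pose DX l k (w : gM M t) := castM (deg_addK t) (D l (t + 1) (X k t w)).
have XD_DX k l w : k != l -> XD k l w = DX l k w by apply: gX_gD_comm.
have DX_diag k w : DX k k w = XD k k w + w by apply: gD_gX_diag.
transitivity (\sum_(k < n | k \notin S) ksign K S k *: \sum_(l in k |: S)
    ksign K ((k |: S) :\ l) l *: XD k l (z ((k |: S) :\ l))).
  apply: eq_bigr => k _; congr (_ *: _); rewrite /koszul_h !raddf_sum.
  apply: eq_bigr => l _; rewrite /= !linearZ /= castM_gX castM_trans.
  by congr (_ *: _); apply: castM_irrelevance.
rewrite (koszul_homotopy_identity z XD_DX DX_diag); congr (_ + _ - _).
apply: eq_bigr => l _; congr (_ *: _); rewrite !raddf_sum.
by apply: eq_bigr => k _; rewrite /= !linearZ /DX.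
Qed.

Lemma koszul_hd_cycle i j (z : {set 'I_n} -> gM M (j - i%:Z)) S :
  koszul_cycle z -> #|S| = i -> koszul_hd z S = 0.
Proof.
case: i z => [|q] z /= z_cycle cardS.
  by rewrite (cards0_eq cardS) /koszul_hd big_set0.
rewrite /koszul_hd big1 // => l lS.
have -> : \sum_(k < n | k \notin S :\ l)
    ksign K (S :\ l) k *: X k (j - (q.+1)%:Z) (z (k |: S :\ l))
  = castM (esym (deg_koszul j q)) (koszul_d z (S :\ l)).
  rewrite linear_sum; apply: eq_bigr => k _; rewrite linearZ /=; congr (_ *: _).
  by rewrite castM_trans castM_id.
rewrite z_cycle ?raddf0 ?scaler0 //.
by move: cardS; rewrite (cardsD1 l) lS => -[].
Qed.

End KoszulHomotopy.

Definition euler_shift (K : fieldType) (n : nat) (M : gradedWeylModule K n)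
    (t : int) (w : gM M t) : gM M t :=
  euler w - t%:~R *: w.

Lemma euler_shift_is_linear (K : fieldType) (n : nat)
    (M : gradedWeylModule K n) (t : int) : linear (@euler_shift K n M t).
Proof.
move=> r x y; rewrite /euler_shift linearP scalerBr scalerDr opprD addrACA.
by congr (_ + _); rewrite !scalerA mulrC.
Qed.

HB.instance Definition _ (K : fieldType) (n : nat) (M : gradedWeylModule K n)
    (t : int) :=
  GRing.isLinear.Build K (gM M t) (gM M t) _ (@euler_shift K n M t)
    (@euler_shift_is_linear K n M t).

Section EulerShift.
Variables (K : fieldType) (n : nat) (M : gradedWeylModule K n).
Local Notation X := (gX M).
Implicit Types (i : nat) (j : int) (S : {set 'I_n}).

Lemma euler_shift_gX t k (w : gM M t) :
  X k t (euler_shift w) = euler_shift (X k t w).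
Proof.
rewrite /euler_shift linearB /= euler_gX linearZ /= intrD scalerDl scale1r.
by rewrite opprD addrACA subrr addr0.
Qed.

Lemma castM_euler_shift (a b : int) (e : a = b) (w : gM M a) :
  castM e (euler_shift w) = euler_shift (castM e w).
Proof. by case: b / e. Qed.

Lemma koszul_d_euler_shift i j (c : {set 'I_n} -> gM M (j - (i.+1)%:Z)) S :
  koszul_d (fun T => euler_shift (c T)) S = euler_shift (koszul_d c S).
Proof.
rewrite /koszul_d linear_sum; apply: eq_bigr => k _.
by rewrite linearZ /= euler_shift_gX castM_euler_shift.
Qed.

Lemma koszul_cycle_euler_shift i j (z : {set 'I_n} -> gM M (j - i%:Z)) :
  koszul_cycle z -> koszul_cycle (fun S => euler_shift (z S)).
Proof.
case: i z => [|q] z //= z_cycle S cardS.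
by rewrite koszul_d_euler_shift z_cycle // raddf0.
Qed.

Lemma koszul_d_lincomb i j (f g : {set 'I_n} -> gM M (j - (i.+1)%:Z)) r s S :
  koszul_d (fun T => r *: f T + s *: g T) S =
  r *: koszul_d f S + s *: koszul_d g S.
Proof.
rewrite /koszul_d !scaler_sumr -big_split /=; apply: eq_bigr => k _.
by rewrite !linearP /= !linearZ /= !scalerA mulrC [s * _]mulrC.
Qed.

Lemma koszul_d0 i j S : koszul_d (fun _ => 0 : gM M (j - (i.+1)%:Z)) S = 0.
Proof. by rewrite /koszul_d big1 // => k _; rewrite !raddf0 ?scaler0. Qed.

Lemma koszul_dh_cycle i j (z : {set 'I_n} -> gM M (j - i%:Z)) S :
  koszul_cycle z -> #|S| = i ->
  koszul_d (koszul_h z) S = euler_shift (z S) + j%:~R *: z S.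
Proof.
move=> z_cycle cardS; rewrite koszul_dh koszul_hd_cycle // subr0 cardS.
rewrite /euler_shift -addrA; congr (_ + _); rewrite -scaleNr -scalerDl.
by rewrite intrB opprB subrK.
Qed.

Lemma koszul_cycle_boundary_nilpotent i j : j%:~R != 0 :> K ->
  forall a (z : {set 'I_n} -> gM M (j - i%:Z)), koszul_cycle z ->
  (forall S, iter a (@euler_shift _ _ M _) (z S) = 0) -> koszul_boundary z.
Proof.
move=> j_neq0; elim=> [|a IH] z z_cycle z_nil.
  by exists (fun _ => 0) => S _; rewrite koszul_d0 -(z_nil S).
have [b Nz_eq] : koszul_boundary (fun S => euler_shift (z S)).
  apply: IH; first exact: koszul_cycle_euler_shift.
  by move=> S; rewrite -iterSr.
have divide_by_j (V : lmodType K) (w u : V) :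
    (- j%:~R^-1) *: w + j%:~R^-1 *: (w + j%:~R *: u) = u.
  by rewrite scaleNr scalerDr addKr scalerA mulVf // scale1r.
exists (fun T => (- j%:~R^-1) *: b T + j%:~R^-1 *: koszul_h z T) => S cardS.
by rewrite koszul_d_lincomb Nz_eq // koszul_dh_cycle // divide_by_j.
Qed.

End EulerShift.

Lemma iter_fixpoint_uniform (T : Type) (I : finType) (g : T -> T) (x0 : T)
    (f : I -> T) :
  g x0 = x0 -> (forall x, exists a, iter a g (f x) = x0) ->
  exists a, forall x, iter a g (f x) = x0.
Proof.
move=> gx0 /fin_all_exists [a fa]; exists (\sum_x a x)%N => x.
rewrite (bigD1 x) //= addnC iterD fa.
by elim: (\sum_(y | y != x) a y)%N => //= m ->.
Qed.

Lemma pchar0_intr_eq0 (K : fieldType) (j : int) :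
  [pchar K] =i pred0 -> (j%:~R == 0 :> K) = (j == 0).
Proof.
move=> /pcharf0P natr_eq0; case: j => m; first exact: natr_eq0.
by rewrite NegzE mulrNz oppr_eq0 natr_eq0.
Qed.

Theorem theorem5p1 (K : fieldType) (hK : [pchar K] =i pred0) (n : nat)
  (M : gradedWeylModule K n) :
  generalized_eulerian M ->
  forall (i : nat) (j : int), j != 0 -> koszul_homology_vanishes M i j.
Proof.
move=> M_eulerian i j j_neq0 z z_cycle.
have [a z_nil] : exists a, forall S, iter a (@euler_shift _ _ M _) (z S) = 0.
  apply: iter_fixpoint_uniform; first exact: raddf0.
  by move=> S; have [a [_ za]] := M_eulerian _ (z S); exists a.
apply: koszul_cycle_boundary_nilpotent z_cycle z_nil.
by rewrite pchar0_intr_eq0.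
Qed.
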